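(* Let $\varepsilon>0$. (Lower case, $\tau\in(0,1]$:) If $\pi$ is a policy for which there exists $w\in\mathcal W_T$ with $d(w,\underline{q}^*_\tau)\le\varepsilon$ and $F^\pi(w)<\tau$, then $\pi$ is $\varepsilon$-optimal for the lower $\tau$-quantile criterion. (Upper case, $\tau\in[0,1)$:) If $\pi$ is a policy for which there exists $w\in\mathcal W_T$ with $d(w,\overline{q}^*_\tau)\le\varepsilon$ and $G^\pi(w)\ge 1-\tau$, then $\pi$ is $\varepsilon$-optimal for the upper $\tau$-quantile criterion.
   Context: An MDP is a tuple $(\mathcal S,\mathcal A,\mathcal P,r,s_0)$ with finite state set, finite action set, transition probabilities, reward function $r:\mathcal S\times\mathcal A\to\mathcal R$, initial state $s_0$, and finite horizon $T$; policies are sequences of $T$ (possibly history-dependent, randomized) decision rules. The wealth of a history is $w(h_0)=w_0$, $w(h_t)=w(h_{t-1})\circ r(s_{t-1},a_{t-1})$ for a binary operation $\circ$ with left identity $w_0$. The set $\mathcal W_T$ of wealth levels of $T$-histories is totally ordered by $\preceq_{\mathcal W}$, has least and greatest elements, and carries a distance $d$ consistent with this order. For a policy $\pi$, $p^\pi(w)$ is the probability that the generated $T$-history has wealth $w$; $F^\pi(w)=\sum_{w'\preceq_{\mathcal W}w}p^\pi(w')$ and $G^\pi(w)=\sum_{w\preceq_{\mathcal W}w'}p^\pi(w')$. Lower $\tau$-quantile: $\underline{q}^\pi_\tau=\min\{w:F^\pi(w)\ge\tau\}$; upper $\tau$-quantile: $\overline{q}^\pi_\tau=\max\{w:G^\pi(w)\ge1-\tau\}$;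 $\underline{q}^*_\tau=\max_\pi\underline{q}^\pi_\tau$, $\overline{q}^*_\tau=\max_\pi\overline{q}^\pi_\tau$ (max over all policies, w.r.t. $\prec_{\mathcal W}$). A policy $\pi$ is $\varepsilon$-optimal for the lower (resp. upper) $\tau$-quantile criterion if $d(\underline{q}^\pi_\tau,\underline{q}^*_\tau)\le\varepsilon$ (resp. $d(\overline{q}^\pi_\tau,\overline{q}^*_\tau)\le\varepsilon$). *)

From mathcomp Require Import all_boot all_order all_algebra.
Set Implicit Arguments. Unset Strict Implicit. Unset Printing Implicit Defensive.
Import Order.TTheory GRing.Theory Num.Theory.
Local Open Scope ring_scope.

Section MDP.
Variables (R : realFieldType) (S A : finType) (W : eqType).
(* transition probabilities P s a s', rewards r s a, initial state s0, horizon T *)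
Variables (P : S -> A -> S -> R) (r : S -> A -> W) (s0 : S) (T : nat).
Variables (op : W -> W -> W) (w0 : W).

Definition mdp_valid : Prop :=
  forall s a, (forall s', 0 <= P s a s') /\ \sum_(s' : S) P s a s' = 1.

(* A T-history s0 a0 s1 a1 ... s_T is encoded by h : {ffun 'I_T -> A * S}
   with h t = (a_t, s_(t+1)).  A t-history (after s0) is a seq of t pairs. *)
Definition hseq (h : {ffun 'I_T -> A * S}) : seq (A * S) :=
  [seq h i | i <- enum 'I_T].
Definition prefix (h : {ffun 'I_T -> A * S}) (t : nat) : seq (A * S) :=
  take t (hseq h).
Definition state_at (h : {ffun 'I_T -> A * S}) (t : nat) : S :=
  last s0 [seq p.2 | p <- prefix h t].

(* A policy: decision rule pi t h_t a = probability of action a at time t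
   after history h_t (history-dependent, randomized). *)
Definition policy := nat -> seq (A * S) -> A -> R.

Definition policy_valid (pi : policy) : Prop :=
  forall (t : nat) (hs : seq (A * S)), (t < T)%N -> size hs = t ->
    (forall a, 0 <= pi t hs a) /\ \sum_(a : A) pi t hs a = 1.

Definition hist_prob (pi : policy) (h : {ffun 'I_T -> A * S}) : R :=
  \prod_(i < T) (pi i (prefix h i) (h i).1 * P (state_at h i) (h i).1 (h i).2).

Definition wealth (h : {ffun 'I_T -> A * S}) : W :=
  foldl (fun w (i : 'I_T) => op w (r (state_at h i) (h i).1)) w0 (enum 'I_T).

Definition WT : seq W :=
  undup [seq wealth h | h <- enum {: {ffun 'I_T -> A * S}}].

Variable le : rel W.
Variable d : W -> W -> R.

Definition total_order_on : Prop :=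
  (forall x, x \in WT -> le x x) /\
  (forall x y, x \in WT -> y \in WT -> le x y -> le y x -> x = y) /\
  (forall x y z, x \in WT -> y \in WT -> z \in WT -> le x y -> le y z -> le x z) /\
  (forall x y, x \in WT -> y \in WT -> le x y \/ le y x).

Definition has_least_greatest : Prop :=
  (exists2 m, m \in WT & forall x, x \in WT -> le m x) /\
  (exists2 M, M \in WT & forall x, x \in WT -> le x M).

Definition distance_consistent : Prop :=
  (forall x y, x \in WT -> y \in WT -> 0 <= d x y) /\
  (forall x y, x \in WT -> y \in WT -> (d x y = 0 <-> x = y)) /\
  (forall x y, x \in WT -> y \in WT -> d x y = d y x) /\
  (forall x y z, x \in WT -> y \in WT -> z \in WT -> d x z <= d x y + d y z) /\
  (forall x y z, x \in WT -> y \in WT -> z \in WT -> le x y -> le y z ->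
     d x y <= d x z /\ d y z <= d x z).

Definition pmass (pi : policy) (w : W) : R :=
  \sum_(h : {ffun 'I_T -> A * S} | wealth h == w) hist_prob pi h.
Definition cdfF (pi : policy) (w : W) : R :=
  \sum_(w' <- WT | le w' w) pmass pi w'.
Definition ccdfG (pi : policy) (w : W) : R :=
  \sum_(w' <- WT | le w w') pmass pi w'.

Definition is_lower_quantile (pi : policy) (tau : R) (q : W) : Prop :=
  [/\ q \in WT, tau <= cdfF pi q &
      forall w, w \in WT -> tau <= cdfF pi w -> le q w].
Definition is_upper_quantile (pi : policy) (tau : R) (q : W) : Prop :=
  [/\ q \in WT, 1 - tau <= ccdfG pi q &
      forall w, w \in WT -> 1 - tau <= ccdfG pi w -> le w q].

Definition is_opt_lower (tau : R) (qs : W) : Prop :=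
  (exists2 pi, policy_valid pi & is_lower_quantile pi tau qs) /\
  (forall pi q, policy_valid pi -> is_lower_quantile pi tau q -> le q qs).
Definition is_opt_upper (tau : R) (qs : W) : Prop :=
  (exists2 pi, policy_valid pi & is_upper_quantile pi tau qs) /\
  (forall pi q, policy_valid pi -> is_upper_quantile pi tau q -> le q qs).

Definition eps_opt_lower (tau : R) (qs : W) (eps : R) (pi : policy) : Prop :=
  forall q, is_lower_quantile pi tau q -> d q qs <= eps.
Definition eps_opt_upper (tau : R) (qs : W) (eps : R) (pi : policy) : Prop :=
  forall q, is_upper_quantile pi tau q -> d q qs <= eps.

End MDP.

From Pilot Require Import Defs.
From mathcomp Require Import all_boot all_order all_algebra.
Set Implicit Arguments. Unset Strict Implicit. Unset Printing Implicit Defensive.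
Import Order.TTheory GRing.Theory Num.Theory.
Local Open Scope ring_scope.

(* If [F^pi(w) < tau <= F^pi(q)] then [w < q], since [F^pi] is monotone; in
   the upper case [w <= q] holds by maximality of the upper quantile [q].
   In both cases [w <= q <= qs] by optimality of [qs], and order consistency
   of [d] gives [d(q, qs) <= d(w, qs) <= eps]. *)

Section Quantiles.
Variables (R : realFieldType) (S A : finType) (W : eqType).
Variables (P : S -> A -> S -> R) (r : S -> A -> W) (s0 : S) (T : nat).
Variables (op : W -> W -> W) (w0 : W) (le : rel W) (d : W -> W -> R).

Local Notation WT := (WT r s0 T op w0).
Local Notation F := (cdfF P r s0 T op w0 le).

Lemma size_prefix (h : {ffun 'I_T -> A * S}) (i : 'I_T) :
  size (Defs.prefix h i) = i.
Proof. by rewrite /Defs.prefix size_take /hseq size_map size_enum_ord ltn_ord. Qed.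

Lemma hist_prob_ge0 (pi : policy R S A) (h : {ffun 'I_T -> A * S}) :
  mdp_valid P -> policy_valid T pi -> 0 <= hist_prob P s0 pi h.
Proof.
move=> HP Hpi; apply: prodr_ge0 => i _; apply: mulr_ge0.
- by case: (Hpi i _ (ltn_ord i) (size_prefix h i)).
- exact: (HP _ _).1.
Qed.

Lemma pmass_ge0 (pi : policy R S A) (w : W) :
  mdp_valid P -> policy_valid T pi -> 0 <= pmass P r s0 T op w0 pi w.
Proof. by move=> HP Hpi; apply: sumr_ge0 => h _; apply: hist_prob_ge0. Qed.

Lemma cdfF_homo (pi : policy R S A) (x y : W) :
  mdp_valid P -> policy_valid T pi ->
  (forall u v z, u \in WT -> v \in WT -> z \in WT -> le u v -> le v z -> le u z) ->
  x \in WT -> y \in WT -> le x y -> F pi x <= F pi y.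
Proof.
move=> HP Hpi Htrans xW yW lexy.
rewrite /cdfF [leLHS]big_mkcond [leRHS]big_mkcond big_seq [leRHS]big_seq.
apply: ler_sum => w wW; case: ifP => [lewx | _].
- by rewrite (Htrans w x y wW xW yW lewx lexy).
- by case: ifP => // _; apply: pmass_ge0.
Qed.

Lemma lower_quantile_gt (pi : policy R S A) (tau : R) (q w : W) :
  mdp_valid P -> policy_valid T pi -> total_order_on r s0 T op w0 le ->
  is_lower_quantile P r s0 T op w0 le pi tau q ->
  w \in WT -> F pi w < tau -> le w q.
Proof.
move=> HP Hpi [_ [_ [Htrans Htot]]] [qW Fq _] wW Fw.
case: (Htot w q wW qW) => // leqw.
by move: Fw; rewrite ltNge (le_trans Fq (cdfF_homo HP Hpi Htrans qW wW leqw)).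
Qed.

Lemma dist_between_le (x y z : W) :
  distance_consistent r s0 T op w0 le d ->
  x \in WT -> y \in WT -> z \in WT -> le x y -> le y z -> d y z <= d x z.
Proof.
by move=> [_ [_ [_ [_ Hcons]]]] xW yW zW lexy leyz; case: (Hcons x y z xW yW zW lexy leyz).
Qed.

End Quantiles.

Theorem lemma4 (R : realFieldType) (S A : finType) (W : eqType)
  (P : S -> A -> S -> R) (r : S -> A -> W) (s0 : S) (T : nat)
  (op : W -> W -> W) (w0 : W) (le : rel W) (d : W -> W -> R) (eps : R) :
  mdp_valid P ->
  (forall x, op w0 x = x) ->
  total_order_on r s0 T op w0 le ->
  has_least_greatest r s0 T op w0 le ->
  distance_consistent r s0 T op w0 le d ->
  0 < eps ->
  (forall (tau : R) (qs : W) (pi : policy R S A),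
     0 < tau <= 1 ->
     is_opt_lower P r s0 T op w0 le tau qs ->
     policy_valid T pi ->
     (exists w, [/\ w \in WT r s0 T op w0, d w qs <= eps &
                    cdfF P r s0 T op w0 le pi w < tau]) ->
     eps_opt_lower P r s0 T op w0 le d tau qs eps pi) /\
  (forall (tau : R) (qs : W) (pi : policy R S A),
     0 <= tau < 1 ->
     is_opt_upper P r s0 T op w0 le tau qs ->
     policy_valid T pi ->
     (exists w, [/\ w \in WT r s0 T op w0, d w qs <= eps &
                    1 - tau <= ccdfG P r s0 T op w0 le pi w]) ->
     eps_opt_upper P r s0 T op w0 le d tau qs eps pi).
Proof.
move=> HP _ Hord _ Hd _; split.
- move=> tau qs pi _ [[_ _ [qsW _ _]] Hopt] Hpi [w [wW dw Fw]] q Hq.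
  have lewq := lower_quantile_gt HP Hpi Hord Hq wW Fw.
  have [qW _ _] := Hq.
  exact: le_trans (dist_between_le Hd wW qW qsW lewq (Hopt pi q Hpi Hq)) dw.
- move=> tau qs pi _ [[_ _ [qsW _ _]] Hopt] Hpi [w [wW dw Gw]] q Hq.
  have [qW _ qmax] := Hq.
  exact: le_trans (dist_between_le Hd wW qW qsW (qmax w wW Gw) (Hopt pi q Hpi Hq)) dw.
Qed.
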